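(* Let $\textsc{prop}$ be a finite set of propositional variables and $w$ a propositional variable not in $\textsc{prop}$. Then (1) $\mathrm{PL}_{\{\oplus_3\}}[\textsc{prop}]\leq_{pc}\mathrm{PL}_{\{\mathsf{oxor}\}}[\textsc{prop}\cup\{w\}]$, and (2) $\mathrm{PL}_{\{\oplus_3\}}[\textsc{prop}]\leq_{pc}\mathrm{PL}_{\{\mathsf{aimp}\}}[\textsc{prop}\cup\{w\}]$.
   Context: $\oplus_3(x,y,z)=x\oplus y\oplus z$, $\mathsf{oxor}(x,y,z)=x\lor(y\oplus z)$, $\mathsf{aimp}(x,y,z)=x\land(y\to z)$. For a set $O$ of Boolean functions and finite variable set $P$, $\mathrm{PL}_O[P]$ is the set of formulas $\phi::=x\mid f(\phi_1,\dots,\phi_n)$ with $x\in P$, $f\in O$, viewed as the concept class whose concepts are these formulas, whose examples are truth assignments $V:P\to\{0,1\}$, and where $\lambda(\phi)$ is the set of satisfying assignments. For concept classes $\mathcal{C}_i=(C_i,E_i,\lambda_i)$, $\mathcal{C}_1\leq_{pc}\mathcal{C}_2$ means there are $f:C_1\to C_2$ and $h:E_1\to E_2$ such that (i) for all $c\in C_1,e\in E_1$: $e\in\lambda_1(c)$ iff $h(e)\in\lambda_2(f(c))$; and (ii) for each $e\in E_2$, either $e\in\lambda_2(f(c))$ for all $c\in C_1$, or for no $c\in C_1$, or there is $e'\in E_1$ with $\{c\mid e\in\lambda_2(f(c))\}=\{c\mid e'\in\lambda_1(c)\}$. *)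

From mathcomp Require Import all_boot.
Set Implicit Arguments. Unset Strict Implicit. Unset Printing Implicit Defensive.

Definition xor3 (x y z : bool) : bool := xorb x (xorb y z).
Definition oxor (x y z : bool) : bool := x || xorb y z.
Definition aimp (x y z : bool) : bool := x && (y ==> z).

Inductive form3 (V : Type) : Type :=
| FVar : V -> form3 V
| FOp  : form3 V -> form3 V -> form3 V -> form3 V.
Arguments FVar {V} _.
Arguments FOp {V} _ _ _.

Fixpoint eval3 (V : Type) (f : bool -> bool -> bool -> bool)
    (v : V -> bool) (phi : form3 V) : bool :=
  match phi with
  | FVar x => v x
  | FOp a b c => f (eval3 f v a) (eval3 f v b) (eval3 f v c)
  end.

Record concept_class := ConceptClass {
  cc_C : Type;
  cc_E : Type;
  cc_lam : cc_C -> cc_E -> Prop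
}.

Definition PL3 (f : bool -> bool -> bool -> bool) (V : Type) : concept_class :=
  @ConceptClass (form3 V) (V -> bool) (fun phi v => eval3 f v phi = true).

(** Polynomial-free "pc" reduction C1 <=_pc C2, exactly as in the paper. *)
Definition pc_reducible (K1 K2 : concept_class) : Prop :=
  exists (f : cc_C K1 -> cc_C K2) (h : cc_E K1 -> cc_E K2),
    (forall (c : cc_C K1) (e : cc_E K1), cc_lam c e <-> cc_lam (f c) (h e)) /\
    (forall e : cc_E K2,
        (forall c : cc_C K1, cc_lam (f c) e) \/
        (forall c : cc_C K1, ~ cc_lam (f c) e) \/
        (exists e' : cc_E K1, forall c : cc_C K1, cc_lam (f c) e <-> cc_lam c e')).

(** The fresh variable w acts as a switch. With w := 0, oxor(w, y, z) is
    y xor z; with w := 1, aimp(w, y, z) is y -> z, so aimp(aimp(w, x, y), y, x)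
    is x <-> y. Either way xor3 is expressible, giving a faithful translation
    of xor3-formulas when w has its guard value. Wrapping the translation as
    oxor(w, _, w), resp. aimp(w, w, _), makes every translated formula constant
    when w has the other value, which yields condition (ii). *)
From mathcomp Require Import all_boot.

Set Implicit Arguments.
Unset Strict Implicit.
Unset Printing Implicit Defensive.

Definition wvar {V : Type} : form3 (option V) := FVar None.

Section Translation.

Variables (V : Type) (f g : bool -> bool -> bool -> bool).
Variable op : form3 (option V) -> form3 (option V) -> form3 (option V) ->
  form3 (option V).

Fixpoint translate (c : form3 V) : form3 (option V) :=
  match c with
  | FVar x => FVar (Some x)
  | FOp a b d => op (translate a) (translate b) (translate d)
  end.

Lemma eval_translate (e : option V -> bool) :
  (forall x y z, eval3 g e (op x y z) =
     f (eval3 g e x) (eval3 g e y) (eval3 g e z)) ->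
  forall c, eval3 g e (translate c) = eval3 f (e \o Some) c.
Proof. by move=> opE; elim=> [x|a IHa b IHb d IHd] //=; rewrite opE IHa IHb IHd. Qed.

End Translation.

Section GuardedReduction.

Variables (V : Type) (f g : bool -> bool -> bool -> bool).
Variables (t : form3 V -> form3 (option V)) (guard k : bool).

Hypothesis eval_guarded : forall e c,
  e None = guard -> eval3 g e (t c) = eval3 f (e \o Some) c.
Hypothesis eval_unguarded : forall e c,
  e None = ~~ guard -> eval3 g e (t c) = k.

Lemma pc_reducible_guarded : pc_reducible (PL3 f V) (PL3 g (option V)).
Proof.
exists t, (fun v => oapp v guard); split=> [c v | e] /=.
  by rewrite eval_guarded.
have [eG | eG] : e None = guard \/ e None = ~~ guard
  by case: (e None); case: guard; auto.
  by right; right; exists (e \o Some) => c; rewrite eval_guarded.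
by case: k eval_unguarded => tE; [left | right; left] => c; rewrite tE.
Qed.

End GuardedReduction.

Section OxorTranslation.

Variable V : Type.

Definition oxor_xor3 (x y z : form3 (option V)) : form3 (option V) :=
  FOp wvar x (FOp wvar y z).

Lemma eval_oxor_xor3 (e : option V -> bool) : e None = false ->
  forall x y z,
  eval3 oxor e (oxor_xor3 x y z) =
  xor3 (eval3 oxor e x) (eval3 oxor e y) (eval3 oxor e z).
Proof. by move=> eW x y z; rewrite /= /oxor eW. Qed.

Definition oxor_of_xor3 (c : form3 V) : form3 (option V) :=
  FOp wvar (translate oxor_xor3 c) wvar.

Lemma pc_reducible_xor3_oxor : pc_reducible (PL3 xor3 V) (PL3 oxor (option V)).
Proof.
apply: (@pc_reducible_guarded _ _ _ oxor_of_xor3 false true) => e c /= eW.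
  by rewrite eW (eval_translate (eval_oxor_xor3 eW)); case: (eval3 xor3 _ c).
by rewrite eW.
Qed.

End OxorTranslation.

Section AimpTranslation.

Variable V : Type.

Definition aimp_iff (x y : form3 (option V)) : form3 (option V) :=
  FOp (FOp wvar x y) y x.

Lemma eval_aimp_iff (e : option V -> bool) x y : e None = true ->
  eval3 aimp e (aimp_iff x y) = (eval3 aimp e x == eval3 aimp e y).
Proof.
by rewrite /= /aimp => ->; case: (eval3 aimp e x); case: (eval3 aimp e y).
Qed.

Definition aimp_xor3 (x y z : form3 (option V)) : form3 (option V) :=
  aimp_iff x (aimp_iff y z).

Lemma eval_aimp_xor3 (e : option V -> bool) : e None = true ->
  forall x y z,
  eval3 aimp e (aimp_xor3 x y z) =
  xor3 (eval3 aimp e x) (eval3 aimp e y) (eval3 aimp e z).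
Proof.
move=> eW x y z; rewrite /aimp_xor3 !eval_aimp_iff // /xor3.
by case: (eval3 aimp e x); case: (eval3 aimp e y); case: (eval3 aimp e z).
Qed.

Definition aimp_of_xor3 (c : form3 V) : form3 (option V) :=
  FOp wvar wvar (translate aimp_xor3 c).

Lemma pc_reducible_xor3_aimp : pc_reducible (PL3 xor3 V) (PL3 aimp (option V)).
Proof.
apply: (@pc_reducible_guarded _ _ _ aimp_of_xor3 true false) => e c /= eW.
  by rewrite eW (eval_translate (eval_aimp_xor3 eW)).
by rewrite eW.
Qed.

End AimpTranslation.

(* PROP is the finite type P; PROP ∪ {w} with w ∉ PROP is option P, w = None. *)
Theorem propositionA7 (P : finType) :
  pc_reducible (PL3 xor3 P) (PL3 oxor (option P)) /\
  pc_reducible (PL3 xor3 P) (PL3 aimp (option P)).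
Proof. by split; [apply: pc_reducible_xor3_oxor | apply: pc_reducible_xor3_aimp]. Qed.
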